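(* Let $G$ be a finitely generated left-orderable group and $H$ a finite index subgroup of $G$ such that $H$ is Hucha with respect to a family $\mathcal{H}$ of subgroups of $H$. Then $G$ is Hucha with respect to $\mathcal{H}$.
   Context: A positive cone of $G$ is a subsemigroup $P$ with $G=P\sqcup P^{-1}\sqcup\{1\}$; $G$ is left-orderable if it has one. With a finite symmetric generating set $X$ and word metric $d_X$, an $r$-path is a sequence $g_0,\dots,g_n$ with $d_X(g_i,g_{i+1})\le r$. A set $S$ $r$-disconnects subsets $H_1,H_2$ if every $r$-path starting in $H_1$ and ending in $H_2$ meets $S$; $S$ $r$-disconnects $P$ if there are $u,v\in P$ with $S$ $r$-disconnecting $\{u\},\{v\}$. A negative swamp of width $r$ for a subgroup $K$ (with respect to a positive cone $P$) is $S\subseteq P^{-1}$ that $r$-disconnects $P$ and $r$-disconnects $g_1K$ and $g_2K$ for some $g_1,g_2\in G$. A finitely generated left-orderable group $G$ is Hucha with respect to a family $\mathcal{H}$ of subgroups if for some finite generating set $X$ (equivalently, any), for every positive cone $P$, every $K\in\mathcal{H}$ and every $r>0$ there is a negative swamp of width $r$ for $K$ in $\Gamma(G,X)$. *)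

From Stdlib Require Import List Arith.
Import ListNotations.

Record group := Group {
  carrier :> Type;
  mul : carrier -> carrier -> carrier;
  inv : carrier -> carrier;
  one : carrier;
  mulA : forall x y z, mul x (mul y z) = mul (mul x y) z;
  mul1g : forall x, mul one x = x;
  mulg1 : forall x, mul x one = x;
  mulVg : forall x, mul (inv x) x = one;
  mulgV : forall x, mul x (inv x) = one
}.

Section Defs.
Variable G : group.

Definition subset (A B : G -> Prop) : Prop := forall x, A x -> B x.

Definition subgroup (S : G -> Prop) : Prop :=
  S (one G) /\ (forall x y, S x -> S y -> S (mul G x y)) /\
  (forall x, S x -> S (inv G x)).

Definition finite_index (S : G -> Prop) : Prop :=
  exists T : list G, forall g : G, exists t, In t T /\ exists s, S s /\ g = mul G t s.

Definition wprod (w : list G) : G := fold_right (mul G) (one G) w.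

Definition generates (S : G -> Prop) (X : list G) : Prop :=
  (forall x, In x X -> S x) /\
  (forall x, In x X -> In (inv G x) X) /\
  (forall g, S g -> exists w, (forall x, In x w -> In x X) /\ wprod w = g).

Definition finitely_generated (S : G -> Prop) : Prop := exists X, generates S X.

(* word metric: d_X(g,h) <= r iff g^{-1} h is a product of at most r letters of X *)
Definition dist_le (X : list G) (g h : G) (r : nat) : Prop :=
  exists w, (forall x, In x w -> In x X) /\ length w <= r /\ mul G g (wprod w) = h.

Fixpoint chain (R : G -> G -> Prop) (x : G) (l : list G) : Prop :=
  match l with
  | nil => True
  | y :: l' => R x y /\ chain R y l'
  end.

Definition rpath (X : list G) (r : nat) (x : G) (l : list G) : Prop :=
  chain (fun a b => dist_le X a b r) x l.

Definition r_disconnects (X : list G) (r : nat) (Sw A B : G -> Prop) : Prop :=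
  forall x l, A x -> B (last l x) -> rpath X r x l ->
    exists y, In y (x :: l) /\ Sw y.

Definition positive_cone (S P : G -> Prop) : Prop :=
  subset P S /\
  (forall x y, P x -> P y -> P (mul G x y)) /\
  (forall g, S g -> P g \/ P (inv G g) \/ g = one G) /\
  (forall g, ~ (P g /\ P (inv G g))) /\
  ~ P (one G).

Definition left_orderable (S : G -> Prop) : Prop := exists P, positive_cone S P.

Definition coset (g : G) (K : G -> Prop) : G -> Prop :=
  fun x => exists k, K k /\ x = mul G g k.

Definition negative_swamp (S : G -> Prop) (X : list G) (P K : G -> Prop) (r : nat)
  (Sw : G -> Prop) : Prop :=
  (forall y, Sw y -> P (inv G y)) /\
  (exists u v, P u /\ P v /\
     r_disconnects X r Sw (fun x => x = u) (fun x => x = v)) /\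
  (exists g1 g2, S g1 /\ S g2 /\
     r_disconnects X r Sw (coset g1 K) (coset g2 K)).

Definition Hucha (S : G -> Prop) (F : (G -> Prop) -> Prop) : Prop :=
  left_orderable S /\
  exists X, generates S X /\
    forall P, positive_cone S P ->
    forall K, F K ->
    forall r, 0 < r ->
    exists Sw, negative_swamp S X P K r Sw.

End Defs.

(* Every element of G has a power in the finite-index subgroup H, so for each g
   in G some h in H satisfies g h >= 1; doing this uniformly over finitely many
   coset representatives gives a retraction rho : G -> H fixing H with
   g <= rho g and d_X(g, rho g) bounded.  Hence rho is coarsely Lipschitz from
   (G, d_X) to (H, d_Y).  The preimage under rho of a negative swamp of large
   width for the cone P restricted to H then still separates the same subsets
   of H, now for r-paths in G, and it is negative since g <= rho g < 1. *)

From Stdlib Require Import List Arith Lia Classical IndefiniteDescription FinFun.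
Import ListNotations.

Lemma list_uniform_bound (A : Type) (L : list A) (Q : A -> nat -> Prop) :
  (forall a m n, m <= n -> Q a m -> Q a n) ->
  (forall a, In a L -> exists n, Q a n) ->
  exists N, forall a, In a L -> Q a N.
Proof.
  intros Qmono HL. induction L as [|a L IH].
  - exists 0. intros _ [].
  - destruct (HL a (in_eq a L)) as [n Qn].
    destruct IH as [N HN]; [intros b Hb; apply HL, in_cons, Hb|].
    exists (max n N). intros b [<-|Hb].
    + exact (Qmono a n _ (Nat.le_max_l n N) Qn).
    + exact (Qmono b N _ (Nat.le_max_r n N) (HN b Hb)).
Qed.

Lemma pigeonhole (A : Type) (T : list A) (f : nat -> A) :
  (forall k, In (f k) T) -> exists i j, i < j /\ f i = f j.
Proof.
  intro Hf. apply NNPP. intro Hn.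
  assert (Finj : Injective f).
  { intros a b E. destruct (lt_eq_lt_dec a b) as [[Hab|Hab]|Hab]; auto;
      exfalso; apply Hn; eauto. }
  assert (Hlen : length (map f (seq 0 (S (length T)))) <= length T).
  { apply NoDup_incl_length.
    - apply Injective_map_NoDup; [exact Finj | apply seq_NoDup].
    - intros y Hy. apply in_map_iff in Hy. destruct Hy as [k [<- _]]. apply Hf. }
  rewrite length_map, length_seq in Hlen. lia.
Qed.

Lemma last_map (A B : Type) (f : A -> B) (l : list A) (x : A) :
  last (map f l) (f x) = f (last l x).
Proof.
  revert x. induction l as [|a l IH]; intro x; [reflexivity|].
  destruct l as [|b l]; [reflexivity|]. exact (IH x).
Qed.

Section GroupFacts.

Variable G : group.

Local Infix "·" := (mul G) (at level 40, left associativity).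
Local Notation "x ⁻¹" := (inv G x) (at level 3, left associativity, format "x ⁻¹").

Lemma mulgI (a b c : G) : a · b = a · c -> b = c.
Proof.
  intro E. rewrite <- (mul1g G b), <- (mul1g G c), <- (mulVg G a), <- !mulA, E.
  reflexivity.
Qed.

Lemma invg_uniq (a b : G) : a · b = one G -> b = a⁻¹.
Proof. intro E. apply (mulgI a). rewrite E, mulgV. reflexivity. Qed.

Lemma invMg (a b : G) : (a · b)⁻¹ = b⁻¹ · a⁻¹.
Proof.
  symmetry. apply invg_uniq.
  rewrite <- mulA, (mulA G b), mulgV, mul1g, mulgV. reflexivity.
Qed.

Lemma invgK (a : G) : a⁻¹⁻¹ = a.
Proof. symmetry. apply invg_uniq, mulVg. Qed.

Lemma invg1 : (one G)⁻¹ = one G.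
Proof. symmetry. apply invg_uniq, mul1g. Qed.

Lemma mulKg (a b : G) : a⁻¹ · (a · b) = b.
Proof. rewrite mulA, mulVg, mul1g. reflexivity. Qed.

Lemma mulKVg (a b : G) : a · (a⁻¹ · b) = b.
Proof. rewrite mulA, mulgV, mul1g. reflexivity. Qed.

Lemma wprod_app (w1 w2 : list G) : wprod G (w1 ++ w2) = wprod G w1 · wprod G w2.
Proof.
  induction w1 as [|a w IH]; simpl.
  - rewrite mul1g. reflexivity.
  - rewrite IH, mulA. reflexivity.
Qed.

Lemma wprod_rev_inv (w : list G) : wprod G (rev (map (inv G) w)) = (wprod G w)⁻¹.
Proof.
  induction w as [|a w IH]; simpl.
  - rewrite invg1. reflexivity.
  - rewrite wprod_app, IH, invMg. simpl. rewrite mulg1. reflexivity.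
Qed.

Fixpoint expg (x : G) (n : nat) : G :=
  match n with 0 => one G | S m => x · expg x m end.

Lemma expgD (x : G) (m n : nat) : expg x (m + n) = expg x m · expg x n.
Proof.
  induction m as [|m IH]; simpl.
  - rewrite mul1g. reflexivity.
  - rewrite IH, mulA. reflexivity.
Qed.

Section WordMetric.

Variable X : list G.

Lemma dist_le_refl (g : G) (r : nat) : dist_le G X g g r.
Proof. exists []. simpl. rewrite mulg1. repeat split; [intros _ []|lia]. Qed.

Lemma dist_le_weaken (g h : G) (r s : nat) :
  r <= s -> dist_le G X g h r -> dist_le G X g h s.
Proof. intros Hrs [w [Hw [Lw Ew]]]. exists w. repeat split; auto. lia. Qed.

Lemma dist_le_mull (c g h : G) (r : nat) :
  dist_le G X g h r -> dist_le G X (c · g) (c · h) r.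
Proof. intros [w [Hw [Lw Ew]]]. exists w. rewrite <- mulA, Ew. auto. Qed.

Lemma dist_le_trans (a b c : G) (r s : nat) :
  dist_le G X a b r -> dist_le G X b c s -> dist_le G X a c (r + s).
Proof.
  intros [w1 [Hw1 [L1 E1]]] [w2 [Hw2 [L2 E2]]]. exists (w1 ++ w2).
  rewrite length_app, wprod_app, mulA, E1, E2.
  repeat split; [apply incl_app; assumption | lia].
Qed.

Lemma dist_le_sym (g h : G) (r : nat) :
  (forall x, In x X -> In x⁻¹ X) -> dist_le G X g h r -> dist_le G X h g r.
Proof.
  intros HX [w [Hw [Lw Ew]]]. exists (rev (map (inv G) w)). repeat split.
  - intros x Hx. apply in_rev, in_map_iff in Hx. destruct Hx as [y [<- Hy]]. auto.
  - rewrite length_rev, length_map. assumption.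
  - rewrite wprod_rev_inv, <- Ew, <- mulA, mulgV, mulg1. reflexivity.
Qed.

Lemma bounded_words_finite (n : nat) :
  exists L : list (list G), forall w, incl w X -> length w <= n -> In w L.
Proof.
  induction n as [|n [L HL]].
  - exists [[]]. intros [|a w] _ Hl; simpl in *; [auto | lia].
  - exists ([] :: flat_map (fun x => map (cons x) L) X).
    intros [|a w] Hw Hl; [left; reflexivity | right].
    apply in_flat_map. exists a. split.
    + apply Hw. left. reflexivity.
    + apply in_map, HL; [exact (proj2 (incl_cons_inv Hw)) | simpl in Hl; lia].
Qed.

End WordMetric.

Definition nonneg (P : G -> Prop) (g : G) : Prop := P g \/ g = one G.

Lemma positive_cone_restrict (S H P : G -> Prop) :
  positive_cone G S P -> subgroup G H -> subset G H S ->
  positive_cone G H (fun x => P x /\ H x).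
Proof.
  intros [_ [PM [Ptri [Panti P1]]]] [_ [HM HI]] HS.
  split; [|split; [|split; [|split]]].
  - intros x [_ Hx]. exact Hx.
  - intros x y [Px Hx] [Py Hy]. split; auto.
  - intros g Hg. destruct (Ptri g (HS g Hg)) as [Pg|[Pg|Eg]]; auto.
  - intros g [[Pg _] [Pg' _]]. exact (Panti g (conj Pg Pg')).
  - intros [P1' _]. exact (P1 P1').
Qed.

Lemma nonneg_mul_pos (S P : G -> Prop) (a b : G) :
  positive_cone G S P -> nonneg P a -> P b -> P (a · b).
Proof.
  intros [_ [PM _]] [Pa| ->] Pb; [exact (PM a b Pa Pb)|]. rewrite mul1g. exact Pb.
Qed.

Lemma nonneg_mul (S P : G -> Prop) (a b : G) :
  positive_cone G S P -> nonneg P a -> nonneg P b -> nonneg P (a · b).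
Proof.
  intros HP Ha [Pb| ->]; [left; exact (nonneg_mul_pos S P a b HP Ha Pb)|].
  rewrite mulg1. exact Ha.
Qed.

Lemma nonneg_expg (S P : G -> Prop) (x : G) (n : nat) :
  positive_cone G S P -> nonneg P x -> nonneg P (expg x n).
Proof.
  intros HP Hx. induction n as [|n IH]; [right; reflexivity|].
  exact (nonneg_mul S P _ _ HP Hx IH).
Qed.

Lemma negative_of_le_negative (S P : G -> Prop) (g y : G) :
  positive_cone G S P -> nonneg P (g⁻¹ · y) -> P y⁻¹ -> P g⁻¹.
Proof.
  intros HP Hgy Py. rewrite <- (mulg1 G g⁻¹), <- (mulgV G y), mulA.
  exact (nonneg_mul_pos S P _ _ HP Hgy Py).
Qed.

Section FiniteIndex.

Variable H : G -> Prop.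
Hypothesis H_subgroup : subgroup G H.

Lemma subgroup_dist_bound (X Y : list G) (n : nat) :
  generates G H Y ->
  exists N, forall a b, H a -> H b -> dist_le G X a b n -> dist_le G Y a b N.
Proof.
  intros [_ [_ HY]]. destruct (bounded_words_finite X n) as [L HL].
  destruct (list_uniform_bound _ L
              (fun w m => H (wprod G w) -> dist_le G Y (one G) (wprod G w) m))
    as [N HN].
  - intros w m m' Hmm' Qm Hw. exact (dist_le_weaken Y _ _ _ _ Hmm' (Qm Hw)).
  - intros w _. destruct (classic (H (wprod G w))) as [Hw|Hw].
    + destruct (HY _ Hw) as [v [Hv Ev]]. exists (length v). intros _.
      exists v. rewrite mul1g. auto.
    + exists 0. intro Hw'. contradiction.
  - exists N. intros a b Ha Hb [w [Hw [Lw Ew]]].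
    assert (Hab : H (wprod G w)).
    { rewrite <- (mulKg a (wprod G w)), Ew.
      destruct H_subgroup as [_ [HM HI]]. auto. }
    destruct (HN w (HL w Hw Lw) Hab) as [v [Hv [Lv Ev]]].
    exists v. rewrite mul1g in Ev. rewrite Ev. auto.
Qed.

Hypothesis H_finite_index : finite_index G H.

Lemma finite_index_expg (x : G) : exists n, 0 < n /\ H (expg x n).
Proof.
  destruct H_finite_index as [T HT].
  destruct (functional_choice _ (fun k => HT (expg x k))) as [t Ht].
  destruct (pigeonhole _ T t (fun k => proj1 (Ht k))) as [i [j [Hij Et]]].
  exists (j - i). split; [lia|].
  (* x^i = t s_i and x^j = t s_j, so x^(j - i) = s_i^-1 s_j *)
  destruct (Ht i) as [_ [si [Hsi Ei]]]. destruct (Ht j) as [_ [sj [Hsj Ej]]].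
  replace j with (i + (j - i)) in Ej at 1 by lia.
  rewrite expgD, Ei, <- Et, <- !mulA in Ej.
  apply mulgI in Ej.
  rewrite <- (mulKg si (expg x (j - i))), Ej.
  destruct H_subgroup as [_ [HM HI]]. auto.
Qed.

Variable P : G -> Prop.
Hypothesis P_cone : positive_cone G (fun _ => True) P.

Lemma positive_cone_cofinal (t : G) : exists h, H h /\ nonneg P (t · h).
Proof.
  pose proof H_subgroup as [H1 _].
  destruct P_cone as [_ [_ [Ptri _]]].
  destruct (Ptri t I) as [Pt|[Pt| ->]].
  - exists (one G). rewrite mulg1. split; [exact H1 | left; exact Pt].
  - destruct (finite_index_expg t⁻¹) as [[|n] [Hn Htn]]; [lia|].
    exists (expg t⁻¹ (S n)). split; [exact Htn|]. simpl. rewrite mulKVg.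
    exact (nonneg_expg _ P _ n P_cone (or_introl Pt)).
  - exists (one G). rewrite mulg1. split; [exact H1 | right; reflexivity].
Qed.

Variable X : list G.
Hypothesis X_generates : generates G (fun _ => True) X.

Lemma nonneg_correction_bound :
  exists M, forall g, exists y, H y /\ nonneg P (g⁻¹ · y) /\ dist_le G X g y M.
Proof.
  destruct H_finite_index as [T HT].
  destruct (list_uniform_bound _ T
              (fun t m => exists q, nonneg P q /\ H (t⁻¹ · q) /\ dist_le G X (one G) q m))
    as [M HM].
  - intros t m m' Hmm' [q [Pq [Hq Dq]]]. exists q.
    repeat split; auto. exact (dist_le_weaken X _ _ _ _ Hmm' Dq).
  - intros t _. destruct (positive_cone_cofinal t) as [h [Hh Pth]].
    destruct X_generates as [_ [_ HX]]. destruct (HX (t · h) I) as [w [Hw Ew]].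
    exists (length w), (t · h). rewrite mulKg. repeat split; auto.
    exists w. rewrite mul1g. auto.
  - exists M. intro g. destruct (HT g⁻¹) as [t [Ht [s [Hs Es]]]].
    destruct (HM t Ht) as [q [Pq [Hq Dq]]].
    exists (g · q). repeat split.
    + (* g = s^-1 t^-1, so g q = s^-1 (t^-1 q) *)
      rewrite <- (invgK g), Es, invMg, <- mulA.
      destruct H_subgroup as [_ [HM' HI]]. auto.
    + rewrite mulKg. exact Pq.
    + rewrite <- (mulg1 G g) at 1. exact (dist_le_mull X g _ _ _ Dq).
Qed.

Lemma retraction_exists :
  exists M (rho : G -> G), forall g,
    H (rho g) /\ nonneg P (g⁻¹ · rho g) /\ dist_le G X g (rho g) M /\ (H g -> rho g = g).
Proof.
  destruct nonneg_correction_bound as [M HM]. exists M.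
  apply (functional_choice (fun g y =>
    H y /\ nonneg P (g⁻¹ · y) /\ dist_le G X g y M /\ (H g -> y = g))).
  intro g. destruct (classic (H g)) as [Hg|Hg].
  - exists g. rewrite mulVg. repeat split; auto using dist_le_refl. right. reflexivity.
  - destruct (HM g) as [y [Hy [Py Dy]]]. exists y. repeat split; auto.
    intro. contradiction.
Qed.

End FiniteIndex.

Lemma retraction_coarse_lipschitz (H : G -> Prop) (X Y : list G) (rho : G -> G) (M r : nat) :
  subgroup G H -> generates G H Y -> (forall x, In x X -> In x⁻¹ X) ->
  (forall g, H (rho g) /\ dist_le G X g (rho g) M) ->
  exists N, forall a b, dist_le G X a b r -> dist_le G Y (rho a) (rho b) N.
Proof.
  intros HH HY HX Hrho.
  destruct (subgroup_dist_bound H HH X Y (M + r + M) HY) as [N HN].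
  exists N. intros a b Dab.
  destruct (Hrho a) as [Ha Da]. destruct (Hrho b) as [Hb Db].
  apply HN; auto.
  exact (dist_le_trans X _ _ _ _ _ (dist_le_trans X _ _ _ _ _ (dist_le_sym X _ _ _ HX Da) Dab) Db).
Qed.

Lemma chain_map (R1 R2 : G -> G -> Prop) (f : G -> G) :
  (forall a b, R1 a b -> R2 (f a) (f b)) ->
  forall x l, chain G R1 x l -> chain G R2 (f x) (map f l).
Proof.
  intros Hf x l. revert x. induction l as [|y l IH]; intros x; simpl; [auto|].
  intros [Rxy Hl]. split; auto.
Qed.

Lemma r_disconnects_preimage (X Y : list G) (r s : nat) (f : G -> G) (Sw A B : G -> Prop) :
  (forall a b, dist_le G X a b r -> dist_le G Y (f a) (f b) s) ->
  (forall a, A a -> f a = a) -> (forall b, B b -> f b = b) ->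
  r_disconnects G Y s Sw A B -> r_disconnects G X r (fun g => Sw (f g)) A B.
Proof.
  intros Hf HA HB D x l Ax Bl Pl.
  destruct (D (f x) (map f l)) as [y [Hy Sy]].
  - rewrite HA; assumption.
  - rewrite last_map, HB; assumption.
  - exact (chain_map _ _ f Hf x l Pl).
  - change (In y (map f (x :: l))) in Hy. apply in_map_iff in Hy.
    destruct Hy as [g [<- Hg]]. exists g. auto.
Qed.

End GroupFacts.

Theorem lemma4p8 (G : group) (H : G -> Prop) (F : (G -> Prop) -> Prop) :
  finitely_generated G (fun _ => True) ->
  left_orderable G (fun _ => True) ->
  subgroup G H ->
  finite_index G H ->
  (forall K, F K -> subgroup G K /\ subset G K H) ->
  Hucha G H F ->
  Hucha G (fun _ => True) F.
Proof.
  intros [X HX] HLO HH HHfin HFK [_ [Y [HY Hswamp]]].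
  split; [exact HLO|]. exists X. split; [exact HX|].
  intros P HP K HK r _.
  destruct (retraction_exists G H HH HHfin P HP X HX) as [M [rho Hrho]].
  destruct (retraction_coarse_lipschitz G H X Y rho M r HH HY (proj1 (proj2 HX)))
    as [N HN]; [intro g; destruct (Hrho g) as [? [_ [? _]]]; auto|].
  pose proof (positive_cone_restrict G _ H P HP HH (fun _ _ => I)) as HPH.
  destruct (Hswamp _ HPH K HK (S N) (Nat.lt_0_succ N))
    as [Sw [Sneg [[u [v [Pu [Pv Duv]]]] [g1 [g2 [Hg1 [Hg2 Dg]]]]]]].
  assert (Hlip : forall a b, dist_le G X a b r -> dist_le G Y (rho a) (rho b) (S N)).
  { intros a b Dab. exact (dist_le_weaken G Y _ _ _ _ (Nat.le_succ_diag_r N) (HN a b Dab)). }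
  assert (Hfix : forall g, H g -> rho g = g) by (intro g; apply (Hrho g)).
  assert (Hcoset : forall g k, H g -> coset G g K k -> H k).
  { intros g k Hg [k' [Hk' ->]]. destruct HH as [_ [HM _]].
    apply HM; [exact Hg | exact (proj2 (HFK K HK) k' Hk')]. }
  exists (fun g => Sw (rho g)). split; [|split].
  - intros g Sg. apply (negative_of_le_negative G _ P g (rho g) HP).
    + apply Hrho.
    + apply (Sneg _ Sg).
  - exists u, v. split; [apply Pu|]. split; [apply Pv|].
    apply (r_disconnects_preimage G X Y r (S N)); auto;
      intros a ->; apply Hfix; [apply Pu | apply Pv].
  - exists g1, g2. repeat split; auto.
    apply (r_disconnects_preimage G X Y r (S N)); eauto.
Qed.
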